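(* For every circuit $c$ there is a safe circuit $d$ such that $c$ and $d$ are equal modulo $E$.
   Context: A circuit is a morphism of the free symmetric strict monoidal category whose objects are natural numbers (tensor = addition) generated by $\mathsf{discard}:1\to 0$, $\mathsf{copy}:1\to 2$, $\mathsf{zero}:0\to1$, $\mathsf{add}:2\to1$, $\mathsf{one}:0\to 1$, $\mathsf{and}:2\to 1$, considered up to the laws of symmetric monoidal categories. Composition is diagrammatic ($f;g$ = first $f$ then $g$), $\sigma$ is the symmetry $2\to2$, $\mathsf{copy}_n$, $\mathsf{discard}_n$ are the evident composites. $E$ is the set of equations: $\mathsf{copy};\sigma=\mathsf{copy}$; $\mathsf{copy};(\mathsf{copy}\otimes \mathrm{id}_1)=\mathsf{copy};(\mathrm{id}_1\otimes\mathsf{copy})$; $\mathsf{copy};(\mathsf{discard}\otimes\mathrm{id}_1)=\mathrm{id}_1$; for every circuit $f:a\to b$, $f;\mathsf{copy}_b=\mathsf{copy}_a;(f\otimes f)$ and $f;\mathsf{discard}_b=\mathsf{discard}_a$; commutativity, associativity and unit laws for $(\mathsf{add},\mathsf{zero})$ and for $(\mathsf{and},\mathsf{one})$; $\mathsf{copy};\mathsf{and}=\mathrm{id}_1$; $\mathsf{copy};\mathsf{add}=\mathsf{discard};\mathsf{zero}$; and distributivity $(\mathrm{id}_1\otimes\mathsf{add});\mathsf{and}=(\mathsf{copy}\otimes\mathrm{id}_2);(\mathrm{id}_1\otimes\sigma\otimes\mathrm{id}_1);(\mathsf{and}\otimes\mathsf{and});\mathsf{add}$. ''Equal modulo $E$''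 means related by the smallest congruence (w.r.t. composition and tensor) containing $E$; morphisms of the quotient are the boolean circuits, which correspond exactly to boolean functions $\mathbb{Z}_2^a\to\mathbb{Z}_2^b$ (with $\mathsf{add}$ = XOR, $\mathsf{and}$ = AND). View a circuit as a directed graph whose nodes are wires and whose edges go from each input wire of a generator occurrence to each of its output wires. A circuit $c$ is safe if for every occurrence of $\mathsf{and}$ in $c$, there is no input port of $c$ from which both input ports of that $\mathsf{and}$ are reachable by a forward path. *)

From Stdlib Require Import List Arith Relations.
Import ListNotations.

Inductive gen : Type := gDiscard | gCopy | gZero | gAdd | gOne | gAnd.

Definition gdom (g : gen) : nat :=
  match g with gDiscard => 1 | gCopy => 1 | gZero => 0 | gAdd => 2 | gOne => 0 | gAnd => 2 end.
Definition gcod (g : gen) : nat :=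
  match g with gDiscard => 0 | gCopy => 2 | gZero => 1 | gAdd => 1 | gOne => 1 | gAnd => 1 end.

(* Raw syntax: generators, identities id_n, symmetries sigma_{m,n} : m+n -> n+m,
   diagrammatic composition (TComp f g = f;g) and tensor. *)
Inductive term : Type :=
| TGen  (g : gen)
| TId   (n : nat)
| TSym  (m n : nat)
| TComp (f g : term)
| TTens (f g : term).

Fixpoint tdom (t : term) : nat :=
  match t with
  | TGen g => gdom g | TId n => n | TSym m n => m + n
  | TComp f _ => tdom f | TTens f g => tdom f + tdom g
  end.
Fixpoint tcod (t : term) : nat :=
  match t with
  | TGen g => gcod g | TId n => n | TSym m n => n + m
  | TComp _ g => tcod g | TTens f g => tcod f + tcod g
  end.

Fixpoint wt (t : term) : Prop :=
  match t with
  | TComp f g => wt f /\ wt g /\ tcod f = tdom g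
  | TTens f g => wt f /\ wt g
  | _ => True
  end.

Definition discard := TGen gDiscard.
Definition copy := TGen gCopy.
Definition zero := TGen gZero.
Definition add := TGen gAdd.
Definition one := TGen gOne.
Definition and := TGen gAnd.
Definition sigma := TSym 1 1.

Fixpoint copyn (n : nat) : term :=
  match n with
  | 0 => TId 0
  | S k => TComp (TTens copy (copyn k)) (TTens (TTens (TId 1) (TSym 1 k)) (TId k))
  end.
Fixpoint discardn (n : nat) : term :=
  match n with
  | 0 => TId 0
  | S k => TTens discard (discardn k)
  end.

Inductive eqE : term -> term -> Prop :=
| eq_refl t : wt t -> eqE t t
| eq_sym t u : eqE t u -> eqE u t
| eq_trans t u v : eqE t u -> eqE u v -> eqE t v
| eq_comp f f' g g' : eqE f f' -> eqE g g' -> tcod f = tdom g ->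
    eqE (TComp f g) (TComp f' g')
| eq_tens f f' g g' : eqE f f' -> eqE g g' -> eqE (TTens f g) (TTens f' g')
| smc_assoc f g h : wt f -> wt g -> wt h -> tcod f = tdom g -> tcod g = tdom h ->
    eqE (TComp (TComp f g) h) (TComp f (TComp g h))
| smc_idl f : wt f -> eqE (TComp (TId (tdom f)) f) f
| smc_idr f : wt f -> eqE (TComp f (TId (tcod f))) f
| smc_tassoc f g h : wt f -> wt g -> wt h ->
    eqE (TTens (TTens f g) h) (TTens f (TTens g h))
| smc_tunitl f : wt f -> eqE (TTens (TId 0) f) f
| smc_tunitr f : wt f -> eqE (TTens f (TId 0)) f
| smc_tid m n : eqE (TTens (TId m) (TId n)) (TId (m + n))
| smc_interchange f g h k : wt f -> wt g -> wt h -> wt k ->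
    tcod f = tdom g -> tcod h = tdom k ->
    eqE (TComp (TTens f h) (TTens g k)) (TTens (TComp f g) (TComp h k))
| smc_symsym m n : eqE (TComp (TSym m n) (TSym n m)) (TId (m + n))
| smc_symnat f g : wt f -> wt g ->
    eqE (TComp (TTens f g) (TSym (tcod f) (tcod g)))
        (TComp (TSym (tdom f) (tdom g)) (TTens g f))
| smc_hex1 m n p :
    eqE (TSym m (n + p)) (TComp (TTens (TSym m n) (TId p)) (TTens (TId n) (TSym m p)))
| smc_hex2 m n p :
    eqE (TSym (m + n) p) (TComp (TTens (TId m) (TSym n p)) (TTens (TSym m p) (TId n)))
| smc_sym0l n : eqE (TSym 0 n) (TId n)
| smc_sym0r n : eqE (TSym n 0) (TId n)
| E_cocomm : eqE (TComp copy sigma) copy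
| E_coassoc : eqE (TComp copy (TTens copy (TId 1))) (TComp copy (TTens (TId 1) copy))
| E_counit : eqE (TComp copy (TTens discard (TId 1))) (TId 1)
| E_copynat f : wt f ->
    eqE (TComp f (copyn (tcod f))) (TComp (copyn (tdom f)) (TTens f f))
| E_discardnat f : wt f -> eqE (TComp f (discardn (tcod f))) (discardn (tdom f))
| E_add_comm : eqE (TComp sigma add) add
| E_add_assoc : eqE (TComp (TTens add (TId 1)) add) (TComp (TTens (TId 1) add) add)
| E_add_unitl : eqE (TComp (TTens zero (TId 1)) add) (TId 1)
| E_add_unitr : eqE (TComp (TTens (TId 1) zero) add) (TId 1)
| E_and_comm : eqE (TComp sigma and) and
| E_and_assoc : eqE (TComp (TTens and (TId 1)) and) (TComp (TTens (TId 1) and) and)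
| E_and_unitl : eqE (TComp (TTens one (TId 1)) and) (TId 1)
| E_and_unitr : eqE (TComp (TTens (TId 1) one) and) (TId 1)
| E_and_idem : eqE (TComp copy and) (TId 1)
| E_add_nil : eqE (TComp copy add) (TComp discard zero)
| E_distr :
    eqE (TComp (TTens (TId 1) add) and)
        (TComp (TComp (TComp (TTens copy (TId 2)) (TTens (TTens (TId 1) sigma) (TId 1)))
                      (TTens and and)) add).

(* The wire graph of a circuit.  [flat t ins fr] threads wire names:
   [ins] are the names of the input wires of t, [fr] the next fresh name;
   it returns the output wire names, the list of generator occurrences
   (generator, its input wires, its output wires), and the next fresh name. *)
Fixpoint flat (t : term) (ins : list nat) (fr : nat)
  : list nat * list (gen * list nat * list nat) * nat :=
  match t with
  | TGen g => let outs := seq fr (gcod g) in (outs, [(g, ins, outs)], fr + gcod g)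
  | TId _ => (ins, [], fr)
  | TSym m _ => (skipn m ins ++ firstn m ins, [], fr)
  | TComp f g =>
      let '(o1, oc1, fr1) := flat f ins fr in
      let '(o2, oc2, fr2) := flat g o1 fr1 in
      (o2, oc1 ++ oc2, fr2)
  | TTens f g =>
      let '(o1, oc1, fr1) := flat f (firstn (tdom f) ins) fr in
      let '(o2, oc2, fr2) := flat g (skipn (tdom f) ins) fr1 in
      (o1 ++ o2, oc1 ++ oc2, fr2)
  end.

(* input ports of t are the wires 0, ..., tdom t - 1 *)
Definition occs (t : term) : list (gen * list nat * list nat) :=
  snd (fst (flat t (seq 0 (tdom t)) (tdom t))).

Definition edge (t : term) (x y : nat) : Prop :=
  exists g ins outs, In (g, ins, outs) (occs t) /\ In x ins /\ In y outs.

Definition reach (t : term) : nat -> nat -> Prop := clos_refl_trans nat (edge t).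

Definition safe (t : term) : Prop :=
  forall p q outs, In (gAnd, [p; q], outs) (occs t) ->
    forall i, i < tdom t -> ~ (reach t i p /\ reach t i q).

From Stdlib Require Import List Arith Lia Setoid Morphisms.
Import ListNotations.

(* A circuit with n inputs equals, modulo E, the circuit that copies its inputs
   to one formula tree per output, the formulas being obtained by evaluating the
   circuit symbolically on variables x_0, ..., x_(n-1): naturality of copy and
   discard pushes every generator into these trees.  The equations E make the
   formulas a Boolean ring, so the Shannon expansion
     e = x_k e[1/x_k] + (x_k + 1) e[0/x_k],
   applied to each variable in turn, rewrites every formula into one where the
   two arguments of each AND mention disjoint variables.  In a formula tree an
   input port reaches a wire only if its variable occurs in the subformula
   computed there, so the resulting circuit is safe. *)

Infix ";;" := TComp (at level 45, left associativity).
Infix "**" := TTens (at level 41, left associativity).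

Lemma copyn_typed n : wt (copyn n) /\ tdom (copyn n) = n /\ tcod (copyn n) = n + n.
Proof. induction n; simpl; intuition lia. Qed.

Lemma discardn_typed n : wt (discardn n) /\ tdom (discardn n) = n /\ tcod (discardn n) = 0.
Proof. induction n; simpl; intuition lia. Qed.

Lemma wt_copyn n : wt (copyn n). Proof. apply copyn_typed. Qed.
Lemma tdom_copyn n : tdom (copyn n) = n. Proof. apply copyn_typed. Qed.
Lemma tcod_copyn n : tcod (copyn n) = n + n. Proof. apply copyn_typed. Qed.
Lemma wt_discardn n : wt (discardn n). Proof. apply discardn_typed. Qed.
Lemma tdom_discardn n : tdom (discardn n) = n. Proof. apply discardn_typed. Qed.
Lemma tcod_discardn n : tcod (discardn n) = 0. Proof. apply discardn_typed. Qed.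

#[local] Hint Rewrite tdom_copyn tcod_copyn tdom_discardn tcod_discardn : arity.

Ltac arity := simpl; autorewrite with arity; simpl; try lia.

Lemma eqE_typed t u : eqE t u -> wt t /\ wt u /\ tdom t = tdom u /\ tcod t = tcod u.
Proof.
  induction 1; simpl in *; autorewrite with arity in *;
  repeat match goal with H : _ /\ _ |- _ => destruct H end;
  repeat split; auto using wt_copyn, wt_discardn; lia.
Qed.

(* [eqE] relates well-typed terms only, so it is not reflexive; [eqw] is an
   equivalence on all terms that agrees with [eqE] on well-typed ones, which
   makes setoid rewriting modulo E available. *)
Definition eqw (t u : term) : Prop := (wt t \/ wt u) -> eqE t u.
Infix "≈" := eqw (at level 70).

Lemma eqw_of_eqE t u : eqE t u -> t ≈ u.
Proof. intros H _; exact H. Qed.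

Lemma eqE_of_eqw t u : wt t -> t ≈ u -> eqE t u.
Proof. intros Ht H; apply H; auto. Qed.

#[local] Instance eqw_Equivalence : Equivalence eqw.
Proof.
  split.
  - intros t [H|H]; apply eq_refl; auto.
  - intros t u H [H1|H1]; apply eq_sym, H; auto.
  - intros t u v H1 H2 [H|H].
    + assert (E1 := H1 (or_introl H)). destruct (eqE_typed _ _ E1) as (_&Hu&_).
      eapply eq_trans; eauto.
    + assert (E2 := H2 (or_intror H)). destruct (eqE_typed _ _ E2) as (Hu&_).
      eapply eq_trans; eauto.
Qed.

#[local] Instance TComp_eqw : Proper (eqw ==> eqw ==> eqw) TComp.
Proof.
  intros f f' Hf g g' Hg [(Wf&Wg&E)|(Wf&Wg&E)]; apply eq_comp; auto.
  destruct (eqE_typed _ _ (Hf (or_intror Wf))) as (_&_&_&Ef).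
  destruct (eqE_typed _ _ (Hg (or_intror Wg))) as (_&_&Eg&_). lia.
Qed.

#[local] Instance TTens_eqw : Proper (eqw ==> eqw ==> eqw) TTens.
Proof. intros f f' Hf g g' Hg [(Wf&Wg)|(Wf&Wg)]; apply eq_tens; auto. Qed.

Lemma comp_assoc f g h : (f ;; g) ;; h ≈ f ;; (g ;; h).
Proof. intros [H|H]; simpl in H; apply smc_assoc; intuition. Qed.

(* Arities enter as equations so that these laws also rewrite terms whose
   indices are only arithmetically equal to [tdom]/[tcod]. *)

Lemma comp_idl n f : n = tdom f -> TId n ;; f ≈ f.
Proof. intros -> [H|H]; simpl in H; apply smc_idl; intuition. Qed.

Lemma comp_idr n f : n = tcod f -> f ;; TId n ≈ f.
Proof. intros -> [H|H]; simpl in H; apply smc_idr; intuition. Qed.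

Lemma tens_assoc f g h : (f ** g) ** h ≈ f ** (g ** h).
Proof. intros [H|H]; simpl in H; apply smc_tassoc; intuition. Qed.

Lemma tens_unitl f : TId 0 ** f ≈ f.
Proof. intros [H|H]; simpl in H; apply smc_tunitl; intuition. Qed.

Lemma tens_unitr f : f ** TId 0 ≈ f.
Proof. intros [H|H]; simpl in H; apply smc_tunitr; intuition. Qed.

Lemma tens_id m n k : k = m + n -> TId m ** TId n ≈ TId k.
Proof. intros ->; apply eqw_of_eqE, smc_tid. Qed.

Lemma interchange f g h k : tcod f = tdom g -> (f ** h) ;; (g ** k) ≈ (f ;; g) ** (h ;; k).
Proof. intros E [H|H]; simpl in H; apply smc_interchange; intuition lia. Qed.

Lemma sym_inv m n k : k = m + n -> TSym m n ;; TSym n m ≈ TId k.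
Proof. intros ->; apply eqw_of_eqE, smc_symsym. Qed.

Lemma sym_natural f g a b c d : a = tcod f -> b = tcod g -> c = tdom f -> d = tdom g ->
  (f ** g) ;; TSym a b ≈ TSym c d ;; (g ** f).
Proof. intros -> -> -> -> [H|H]; simpl in H; apply smc_symnat; intuition. Qed.

Lemma sym_0l n : TSym 0 n ≈ TId n. Proof. apply eqw_of_eqE, smc_sym0l. Qed.
Lemma sym_0r n : TSym n 0 ≈ TId n. Proof. apply eqw_of_eqE, smc_sym0r. Qed.

Lemma copyn_natural f a b : a = tdom f -> b = tcod f -> f ;; copyn b ≈ copyn a ;; (f ** f).
Proof. intros -> -> [H|H]; simpl in H; autorewrite with arity in H; apply E_copynat; intuition. Qed.

Lemma discardn_natural f a b : wt f -> a = tdom f -> b = tcod f -> f ;; discardn b ≈ discardn a.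
Proof. intros W -> -> _; apply E_discardnat; auto. Qed.

Lemma copy_counitl : copy ;; (discard ** TId 1) ≈ TId 1.
Proof. apply eqw_of_eqE, E_counit. Qed.

Lemma copy_counitr : copy ;; (TId 1 ** discard) ≈ TId 1.
Proof.
  rewrite <- (eqw_of_eqE _ _ E_cocomm), comp_assoc. unfold sigma.
  rewrite <- (sym_natural discard (TId 1)) by reflexivity.
  rewrite sym_0l, comp_idr by reflexivity. apply copy_counitl.
Qed.

Lemma copyn_1 : copyn 1 ≈ copy.
Proof.
  simpl. rewrite sym_0r, tens_unitr, (tens_id 1 1 2), tens_unitr by reflexivity.
  apply comp_idr. reflexivity.
Qed.

Lemma discardn_1 : discardn 1 ≈ discard.
Proof. apply tens_unitr. Qed.

Lemma discardn_add a b : discardn a ** discardn b ≈ discardn (a + b).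
Proof. induction a; simpl; [apply tens_unitl | rewrite tens_assoc, IHa; reflexivity]. Qed.

Lemma tens_exchange u v u' v' a b a' b' p q p' q' :
  tdom u = a -> tdom v = b -> tdom u' = a' -> tdom v' = b' ->
  tcod u = p -> tcod v = q -> tcod u' = p' -> tcod v' = q' ->
  (u ** v) ** (u' ** v')
  ≈ (TId a ** TSym b a') ** TId b' ;; ((u ** u') ** (v ** v')) ;; (TId p ** TSym p' q) ** TId q'.
Proof.
  intros Ha Hb Ha' Hb' Hp Hq Hp' Hq'.
  assert (Reassoc : (u ** u') ** (v ** v') ≈ (u ** (u' ** v)) ** v').
  { rewrite tens_assoc, <- (tens_assoc u' v v'), <- tens_assoc. reflexivity. }
  rewrite Reassoc, !interchange by (simpl; lia).
  rewrite (comp_idl a u), (comp_idl b' v') by auto.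
  rewrite <- (sym_natural v u' q p' b a') by auto.
  rewrite (comp_idr p u), (comp_idr q' v'), comp_assoc, (sym_inv q p' (q + p')) by auto.
  rewrite (comp_idr (q + p') (v ** u')) by (simpl; lia).
  rewrite <- (tens_assoc u v u'), (tens_assoc (u ** v) u' v'). reflexivity.
Qed.

Lemma shuffle_inv K :
  (TId 1 ** TSym 1 K) ** TId K ;; (TId 1 ** TSym K 1) ** TId K ≈ TId (1 + (1 + K) + K).
Proof.
  rewrite !interchange by (simpl; lia).
  rewrite (sym_inv 1 K (1 + K)), !(comp_idr _ (TId _)) by reflexivity.
  rewrite !(tens_id _ _ _ Logic.eq_refl). reflexivity.
Qed.

Definition projs k1 k2 : term := (TId k1 ** discardn k2) ** (discardn k1 ** TId k2).

Lemma copyn_projs n k1 k2 : k1 + k2 = n -> copyn n ;; projs k1 k2 ≈ TId n.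
Proof.
  revert k1 k2; induction n as [|K IH]; intros k1 k2 Hk; unfold projs.
  - assert (k1 = 0) by lia; assert (k2 = 0) by lia; subst; simpl.
    rewrite !(tens_id 0 0 0), comp_idl by reflexivity. reflexivity.
  - destruct k1 as [|k1]; simpl in Hk; cbn [discardn copyn].
    + subst k2. rewrite !tens_unitl, <- (tens_id 1 K (S K)) by reflexivity.
      rewrite (tens_exchange discard (discardn K) (TId 1) (TId K) 1 K 1 K 0 0 1 K) by arity.
      rewrite <- !comp_assoc, (comp_assoc _ _ ((TId 1 ** TSym K 1) ** TId K)), shuffle_inv.
      rewrite comp_idr by arity.
      rewrite sym_0r, (tens_id 0 1 1), (tens_id 1 K (1 + K)), comp_idr by arity.
      rewrite interchange, copy_counitl by arity.
      specialize (IH 0 K Logic.eq_refl). unfold projs in IH. simpl in IH.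
      rewrite !tens_unitl in IH. rewrite IH. apply tens_id. reflexivity.
    + rewrite <- (tens_id 1 k1 (S k1)) by reflexivity.
      rewrite (tens_assoc (TId 1) (TId k1)), (tens_assoc discard).
      rewrite (tens_exchange (TId 1) (TId k1 ** discardn k2) discard (discardn k1 ** TId k2)
                 1 K 1 K 1 k1 0 k2) by arity.
      rewrite <- !comp_assoc, (comp_assoc _ _ ((TId 1 ** TSym K 1) ** TId K)), shuffle_inv.
      rewrite comp_idr by arity.
      rewrite sym_0l, (tens_id 1 k1 (1 + k1)), (tens_id (1 + k1) k2 (1 + k1 + k2)) by reflexivity.
      rewrite comp_idr by arity.
      rewrite interchange, copy_counitr by arity.
      rewrite (IH k1 k2) by lia. apply tens_id. reflexivity.
Qed.

Lemma copyn_discardn_l n Y : tdom Y = n -> copyn n ;; (discardn n ** Y) ≈ Y.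
Proof.
  intros HY.
  transitivity (copyn n ;; ((discardn n ** TId n) ;; (TId 0 ** Y))).
  { rewrite interchange, comp_idr, comp_idl by arity. reflexivity. }
  pose proof (copyn_projs n 0 n Logic.eq_refl) as P. unfold projs in P. simpl in P.
  rewrite !tens_unitl in P. rewrite <- comp_assoc, P, comp_idl by arity. apply tens_unitl.
Qed.

Lemma copyn_discardn_r n Y : tdom Y = n -> copyn n ;; (Y ** discardn n) ≈ Y.
Proof.
  intros HY.
  transitivity (copyn n ;; ((TId n ** discardn n) ;; (Y ** TId 0))).
  { rewrite interchange, comp_idr, comp_idl by arity. reflexivity. }
  pose proof (copyn_projs n n 0 (Nat.add_0_r n)) as P. unfold projs in P. simpl in P.
  rewrite !tens_unitr in P. rewrite <- comp_assoc, P, comp_idl by arity. apply tens_unitr.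
Qed.

Lemma pair_projs X n k1 k2 : wt X -> tdom X = n -> tcod X = k1 + k2 ->
  X ≈ copyn n ;; ((X ;; (TId k1 ** discardn k2)) ** (X ;; (discardn k1 ** TId k2))).
Proof.
  intros W Hd Hc.
  rewrite <- interchange, <- comp_assoc, <- (copyn_natural X n (k1 + k2)) by arity.
  rewrite comp_assoc. fold (projs k1 k2).
  rewrite copyn_projs, comp_idr by auto. reflexivity.
Qed.

Inductive expr : Type :=
| EVar (i : nat)
| EZero
| EOne
| EAdd (a b : expr)
| EAnd (a b : expr).

(* Variables [EVar i] with [i >= n] are read as [0]. *)
Fixpoint ecirc (n : nat) (e : expr) : term :=
  match e with
  | EVar i => if i <? n then discardn i ** (TId 1 ** discardn (n - S i)) else discardn n ;; zero
  | EZero => discardn n ;; zero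
  | EOne => discardn n ;; one
  | EAdd a b => copyn n ;; (ecirc n a ** ecirc n b) ;; add
  | EAnd a b => copyn n ;; (ecirc n a ** ecirc n b) ;; and
  end.

Fixpoint ecircs (n : nat) (es : list expr) : term :=
  match es with
  | [] => discardn n
  | e :: es => copyn n ;; (ecirc n e ** ecircs n es)
  end.

Lemma ecirc_typed n e : wt (ecirc n e) /\ tdom (ecirc n e) = n /\ tcod (ecirc n e) = 1.
Proof.
  pose proof (copyn_typed n); pose proof (discardn_typed n).
  induction e; simpl; autorewrite with arity; try (intuition lia).
  destruct (Nat.ltb_spec i n); simpl; autorewrite with arity; try (intuition lia).
  pose proof (discardn_typed i); pose proof (discardn_typed (n - S i)). intuition lia.
Qed.

Lemma wt_ecirc n e : wt (ecirc n e). Proof. apply ecirc_typed. Qed.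
Lemma tdom_ecirc n e : tdom (ecirc n e) = n. Proof. apply ecirc_typed. Qed.
Lemma tcod_ecirc n e : tcod (ecirc n e) = 1. Proof. apply ecirc_typed. Qed.
#[local] Hint Rewrite tdom_ecirc tcod_ecirc : arity.

Lemma ecircs_typed n es :
  wt (ecircs n es) /\ tdom (ecircs n es) = n /\ tcod (ecircs n es) = length es.
Proof.
  induction es as [|e es IH]; simpl; autorewrite with arity; auto using wt_discardn.
  destruct IH as (?&?&?). repeat split; auto using wt_copyn, wt_ecirc; lia.
Qed.

Lemma wt_ecircs n es : wt (ecircs n es). Proof. apply ecircs_typed. Qed.
Lemma tdom_ecircs n es : tdom (ecircs n es) = n. Proof. apply ecircs_typed. Qed.
Lemma tcod_ecircs n es : tcod (ecircs n es) = length es. Proof. apply ecircs_typed. Qed.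
#[local] Hint Rewrite tdom_ecircs tcod_ecircs : arity.

Lemma ecircs_single n e : ecircs n [e] ≈ ecirc n e.
Proof. apply copyn_discardn_r. arity. Qed.

Lemma ecircs_app_projl n es1 es2 :
  ecircs n (es1 ++ es2) ;; (TId (length es1) ** discardn (length es2)) ≈ ecircs n es1.
Proof.
  induction es1 as [|e es1 IH]; simpl.
  - rewrite tens_unitl. apply discardn_natural; arity. apply wt_ecircs.
  - rewrite <- (tens_id 1 (length es1)), tens_assoc, comp_assoc, interchange by arity.
    rewrite IH, comp_idr by arity. reflexivity.
Qed.

Lemma ecircs_app_projr n es1 es2 :
  ecircs n (es1 ++ es2) ;; (discardn (length es1) ** TId (length es2)) ≈ ecircs n es2.
Proof.
  induction es1 as [|e es1 IH]; simpl.
  - rewrite tens_unitl. apply comp_idr. arity.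
  - rewrite tens_assoc, comp_assoc, interchange, IH, <- discardn_1 by arity.
    rewrite (discardn_natural (ecirc n e) n 1) by (apply wt_ecirc || arity).
    apply copyn_discardn_l. arity.
Qed.

Lemma ecircs_app n es1 es2 : ecircs n (es1 ++ es2) ≈ copyn n ;; (ecircs n es1 ** ecircs n es2).
Proof.
  rewrite (pair_projs (ecircs n (es1 ++ es2)) n (length es1) (length es2)) at 1
    by (apply wt_ecircs || (arity; rewrite length_app; lia)).
  rewrite ecircs_app_projl, ecircs_app_projr. reflexivity.
Qed.

Lemma ecircs_app_sym n es1 es2 m k : length es1 = m -> length es2 = k ->
  ecircs n (es1 ++ es2) ;; TSym m k ≈ ecircs n (es2 ++ es1).
Proof.
  intros <- <-.
  assert (W : wt (ecircs n (es1 ++ es2) ;; TSym (length es1) (length es2))).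
  { simpl. rewrite tcod_ecircs, length_app. auto using wt_ecircs. }
  rewrite (pair_projs _ n (length es2) (length es1)) by (auto; arity).
  rewrite !comp_assoc.
  rewrite <- (sym_natural (discardn (length es1)) (TId (length es2)) 0 (length es2)) by arity.
  rewrite <- (sym_natural (TId (length es1)) (discardn (length es2)) (length es1) 0) by arity.
  rewrite sym_0l, sym_0r, <- !comp_assoc, !comp_idr by (arity; rewrite length_app; lia).
  rewrite ecircs_app_projl, ecircs_app_projr. symmetry. apply ecircs_app.
Qed.

Fixpoint interp {A : Type} (gf : gen -> list A -> list A) (t : term) (xs : list A) : list A :=
  match t with
  | TGen g => gf g xs
  | TId _ => xs
  | TSym m _ => skipn m xs ++ firstn m xs
  | TComp f g => interp gf g (interp gf f xs)
  | TTens f g => interp gf f (firstn (tdom f) xs) ++ interp gf g (skipn (tdom f) xs)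
  end.

Lemma length_interp {A} (gf : gen -> list A -> list A) :
  (forall g xs, length (gf g xs) = gcod g) ->
  forall t xs, wt t -> length xs = tdom t -> length (interp gf t xs) = tcod t.
Proof.
  intros Hg t; induction t; intros xs W Hxs; simpl in *; auto.
  - rewrite length_app, length_skipn, length_firstn. lia.
  - destruct W as (W1&W2&E). apply IHt2; auto. rewrite IHt1; auto.
  - destruct W as (W1&W2). rewrite length_app, IHt1, IHt2; auto.
    + rewrite length_skipn; lia.
    + rewrite length_firstn; lia.
Qed.

(* The fallback values, for arguments of the wrong length, only keep arities right. *)
Definition expr_gen (g : gen) (es : list expr) : list expr :=
  match g, es with
  | gDiscard, _ => []
  | gCopy, [a] => [a; a]
  | gCopy, _ => [EZero; EZero]
  | gZero, _ => [EZero]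
  | gOne, _ => [EOne]
  | gAdd, [a; b] => [EAdd a b]
  | gAnd, [a; b] => [EAnd a b]
  | gAdd, _ | gAnd, _ => [EZero]
  end.

Lemma length_expr_gen g es : length (expr_gen g es) = gcod g.
Proof. destruct g, es as [|? [|? [|]]]; reflexivity. Qed.

Lemma ecircs_gen n g es : length es = gdom g -> ecircs n es ;; TGen g ≈ ecircs n (expr_gen g es).
Proof.
  destruct g, es as [|a [|b [|]]]; cbn [expr_gen length gdom]; intros Hes; try lia.
  - rewrite <- discardn_1. apply (discardn_natural (ecircs n [a])); [apply wt_ecircs | arity ..].
  - rewrite <- copyn_1, ecircs_single, (copyn_natural (ecirc n a) n 1) by arity.
    change (ecircs n [a; a]) with (copyn n ;; (ecirc n a ** ecircs n [a])).
    rewrite ecircs_single. reflexivity.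
  - rewrite ecircs_single. reflexivity.
  - change (ecircs n [a; b]) with (copyn n ;; (ecirc n a ** ecircs n [b])).
    rewrite !ecircs_single. reflexivity.
  - rewrite ecircs_single. reflexivity.
  - change (ecircs n [a; b]) with (copyn n ;; (ecirc n a ** ecircs n [b])).
    rewrite !ecircs_single. reflexivity.
Qed.

Lemma ecircs_comp n t : wt t ->
  forall es, length es = tdom t -> ecircs n es ;; t ≈ ecircs n (interp expr_gen t es).
Proof.
  induction t as [g|k|m k|f IHf g IHg|f IHf g IHg]; intros W es Hes; simpl in *.
  - apply ecircs_gen. exact Hes.
  - apply comp_idr. arity.
  - rewrite <- (firstn_skipn m es) at 1.
    apply ecircs_app_sym; [rewrite length_firstn | rewrite length_skipn]; lia.
  - destruct W as (Wf&Wg&E).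
    rewrite <- comp_assoc, IHf by auto.
    apply IHg; auto. rewrite (length_interp expr_gen length_expr_gen); auto.
  - destruct W as (Wf&Wg).
    rewrite <- (firstn_skipn (tdom f) es) at 1.
    rewrite ecircs_app, comp_assoc, interchange by (arity; rewrite length_firstn; lia).
    rewrite IHf, IHg by (auto; rewrite ?length_firstn, ?length_skipn; lia).
    symmetry. apply ecircs_app.
Qed.

Fixpoint esubst (k : nat) (c : expr) (e : expr) : expr :=
  match e with
  | EVar j => if j =? k then c else EVar j
  | EZero => EZero
  | EOne => EOne
  | EAdd a b => EAdd (esubst k c a) (esubst k c b)
  | EAnd a b => EAnd (esubst k c a) (esubst k c b)
  end.

Fixpoint occurs (i : nat) (e : expr) : Prop :=
  match e with
  | EVar j => i = j
  | EZero | EOne => False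
  | EAdd a b | EAnd a b => occurs i a \/ occurs i b
  end.

Definition vars_below (k : nat) (e : expr) : Prop := forall i, occurs i e -> i < k.

Fixpoint safe_expr (e : expr) : Prop :=
  match e with
  | EAdd a b => safe_expr a /\ safe_expr b
  | EAnd a b => safe_expr a /\ safe_expr b /\ forall i, occurs i a -> occurs i b -> False
  | _ => True
  end.

Lemma vars_below_esubst k c e : c = EZero \/ c = EOne ->
  vars_below (S k) e -> vars_below k (esubst k c e).
Proof.
  intros Hc He i. induction e as [j| | |a IHa b IHb|a IHa b IHb]; simpl.
  - destruct (Nat.eqb_spec j k) as [->|Hjk].
    + destruct Hc as [->| ->]; simpl; tauto.
    + simpl. intros ->. specialize (He j Logic.eq_refl). lia.
  - tauto.
  - tauto.
  - intros [H|H]; [apply IHa | apply IHb]; auto; intros j Hj; apply He; simpl; auto.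
  - intros [H|H]; [apply IHa | apply IHb]; auto; intros j Hj; apply He; simpl; auto.
Qed.

Lemma vars_below_exists e : exists k, vars_below k e.
Proof.
  unfold vars_below.
  induction e as [i| | |a [ka Ha] b [kb Hb]|a [ka Ha] b [kb Hb]]; simpl.
  - exists (S i). intros; lia.
  - exists 0; tauto.
  - exists 0; tauto.
  - exists (ka + kb). intros i [H|H]; [specialize (Ha _ H) | specialize (Hb _ H)]; lia.
  - exists (ka + kb). intros i [H|H]; [specialize (Ha _ H) | specialize (Hb _ H)]; lia.
Qed.

Section ExprAlgebra.

Variable n : nat.

Definition eequiv (a b : expr) : Prop := ecirc n a ≈ ecirc n b.
Local Infix "≡" := eequiv (at level 70).

#[local] Instance eequiv_Equivalence : Equivalence eequiv.
Proof. unfold eequiv; split; intro; intros; [reflexivity | symmetry | etransitivity]; eauto. Qed.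

#[local] Instance EAdd_eequiv : Proper (eequiv ==> eequiv ==> eequiv) EAdd.
Proof. intros a a' Ha b b' Hb. unfold eequiv in *. simpl. rewrite Ha, Hb. reflexivity. Qed.

#[local] Instance EAnd_eequiv : Proper (eequiv ==> eequiv ==> eequiv) EAnd.
Proof. intros a a' Ha b b' Hb. unfold eequiv in *. simpl. rewrite Ha, Hb. reflexivity. Qed.

Lemma eequiv_of_law lhs rhs es x y : eqE lhs rhs -> length es = tdom lhs ->
  interp expr_gen lhs es = [x] -> interp expr_gen rhs es = [y] -> x ≡ y.
Proof.
  intros E Hes Hx Hy. destruct (eqE_typed _ _ E) as (Wl&Wr&D&_). unfold eequiv.
  rewrite <- !ecircs_single, <- Hx, <- Hy.
  rewrite <- (ecircs_comp n lhs Wl es Hes), <- (ecircs_comp n rhs Wr es ltac:(lia)).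
  rewrite (eqw_of_eqE _ _ E). reflexivity.
Qed.

Lemma EAdd_comm a b : EAdd a b ≡ EAdd b a.
Proof. symmetry. apply (eequiv_of_law _ _ [a; b] _ _ E_add_comm); reflexivity. Qed.
Lemma EAdd_assoc a b c : EAdd (EAdd a b) c ≡ EAdd a (EAdd b c).
Proof. apply (eequiv_of_law _ _ [a; b; c] _ _ E_add_assoc); reflexivity. Qed.
Lemma EAdd_0l a : EAdd EZero a ≡ a.
Proof. apply (eequiv_of_law _ _ [a] _ _ E_add_unitl); reflexivity. Qed.
Lemma EAdd_diag a : EAdd a a ≡ EZero.
Proof. apply (eequiv_of_law _ _ [a] _ _ E_add_nil); reflexivity. Qed.
Lemma EAnd_comm a b : EAnd a b ≡ EAnd b a.
Proof. symmetry. apply (eequiv_of_law _ _ [a; b] _ _ E_and_comm); reflexivity. Qed.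
Lemma EAnd_assoc a b c : EAnd (EAnd a b) c ≡ EAnd a (EAnd b c).
Proof. apply (eequiv_of_law _ _ [a; b; c] _ _ E_and_assoc); reflexivity. Qed.
Lemma EAnd_1l a : EAnd EOne a ≡ a.
Proof. apply (eequiv_of_law _ _ [a] _ _ E_and_unitl); reflexivity. Qed.
Lemma EAnd_diag a : EAnd a a ≡ a.
Proof. apply (eequiv_of_law _ _ [a] _ _ E_and_idem); reflexivity. Qed.
Lemma EAnd_EAdd_distrl a b c : EAnd a (EAdd b c) ≡ EAdd (EAnd a b) (EAnd a c).
Proof. apply (eequiv_of_law _ _ [a; b; c] _ _ E_distr); reflexivity. Qed.

Lemma EAnd_EAdd_distrr a b c : EAnd (EAdd b c) a ≡ EAdd (EAnd b a) (EAnd c a).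
Proof. rewrite !(EAnd_comm _ a). apply EAnd_EAdd_distrl. Qed.

Lemma EAdd_0r a : EAdd a EZero ≡ a.
Proof. rewrite EAdd_comm. apply EAdd_0l. Qed.

Lemma EAnd_1r a : EAnd a EOne ≡ a.
Proof. rewrite EAnd_comm. apply EAnd_1l. Qed.

Lemma EAnd_0l a : EAnd EZero a ≡ EZero.
Proof. rewrite <- (EAdd_diag EZero) at 1. rewrite EAnd_EAdd_distrr. apply EAdd_diag. Qed.

Lemma EAnd_0r a : EAnd a EZero ≡ EZero.
Proof. rewrite EAnd_comm. apply EAnd_0l. Qed.

Lemma EAnd_EAnd_distrl y a b : EAnd y y ≡ y -> EAnd y (EAnd a b) ≡ EAnd (EAnd y a) (EAnd y b).
Proof.
  intros Hy. symmetry.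
  rewrite (EAnd_assoc y a), <- (EAnd_assoc a y b), (EAnd_comm a y), (EAnd_assoc y a b).
  rewrite <- (EAnd_assoc y y), Hy. reflexivity.
Qed.

Lemma EAnd_esubst y k c : EAnd y y ≡ y -> EAnd y (EVar k) ≡ EAnd y c ->
  forall e, EAnd y e ≡ EAnd y (esubst k c e).
Proof.
  intros Hy Hk e; induction e as [i| | |a IHa b IHb|a IHa b IHb]; simpl.
  - destruct (Nat.eqb_spec i k); subst; [exact Hk | reflexivity].
  - reflexivity.
  - reflexivity.
  - rewrite !EAnd_EAdd_distrl, IHa, IHb. reflexivity.
  - rewrite !(EAnd_EAnd_distrl y) by exact Hy. rewrite IHa, IHb. reflexivity.
Qed.

Lemma shannon k e :
  e ≡ EAdd (EAnd (EVar k) (esubst k EOne e)) (EAnd (EAdd (EVar k) EOne) (esubst k EZero e)).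
Proof.
  rewrite <- (EAnd_esubst (EVar k) k EOne (EAnd_diag _)).
  2:{ rewrite EAnd_diag, EAnd_1r. reflexivity. }
  rewrite <- (EAnd_esubst (EAdd (EVar k) EOne) k EZero).
  - rewrite <- EAnd_EAdd_distrr, <- EAdd_assoc, EAdd_diag, EAdd_0l, EAnd_1l. reflexivity.
  - rewrite EAnd_EAdd_distrr, EAnd_1l, EAnd_EAdd_distrl, EAnd_diag, EAnd_1r, EAdd_diag, EAdd_0l.
    reflexivity.
  - rewrite EAnd_EAdd_distrr, EAnd_diag, EAnd_1l, EAdd_diag, EAnd_0r. reflexivity.
Qed.

Lemma closed_expr_const e : vars_below 0 e -> e ≡ EZero \/ e ≡ EOne.
Proof.
  unfold vars_below.
  induction e as [i| | |a IHa b IHb|a IHa b IHb]; simpl; intros H.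
  - specialize (H i Logic.eq_refl). lia.
  - left; reflexivity.
  - right; reflexivity.
  - destruct (IHa ltac:(auto)) as [-> | ->], (IHb ltac:(auto)) as [-> | ->].
    + left; apply EAdd_0l.
    + right; apply EAdd_0l.
    + right; apply EAdd_0r.
    + left; apply EAdd_diag.
  - destruct (IHa ltac:(auto)) as [-> | ->], (IHb ltac:(auto)) as [-> | ->].
    + left; apply EAnd_0l.
    + left; apply EAnd_0l.
    + left; apply EAnd_0r.
    + right; apply EAnd_1l.
Qed.

(* Expand along the last variable [x_k]; the two cofactors no longer mention it. *)
Lemma exists_safe_expr k : forall e, vars_below k e ->
  exists e', safe_expr e' /\ vars_below k e' /\ e ≡ e'.
Proof.
  induction k as [|k IH]; intros e He.
  - destruct (closed_expr_const e He) as [H|H]; [exists EZero | exists EOne];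
      repeat split; simpl; auto; intros i [].
  - destruct (IH _ (vars_below_esubst k EOne e (or_intror Logic.eq_refl) He))
      as (e1 & S1 & B1 & E1).
    destruct (IH _ (vars_below_esubst k EZero e (or_introl Logic.eq_refl) He))
      as (e0 & S0 & B0 & E0).
    exists (EAdd (EAnd (EVar k) e1) (EAnd (EAdd (EVar k) EOne) e0)). repeat split; simpl.
    + exact S1.
    + intros i -> Hi. specialize (B1 _ Hi). lia.
    + exact S0.
    + intros i [->|[]] Hi. specialize (B0 _ Hi). lia.
    + intros i [[->|Hi]|[[->|[]]|Hi]]; [| specialize (B1 _ Hi) | | specialize (B0 _ Hi)]; lia.
    + rewrite (shannon k e), E1, E0. reflexivity.
Qed.

End ExprAlgebra.

Lemma ecircs_vars N b : forall a, a + b = N ->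
  discardn a ** TId b ≈ ecircs N (map EVar (seq a b)).
Proof.
  induction b as [|b IH]; intros a Hab; simpl.
  - rewrite tens_unitr. replace a with N by lia. reflexivity.
  - assert (W : wt (discardn a ** TId (S b))) by (simpl; auto using wt_discardn).
    rewrite (pair_projs _ N 1 b W) by arity.
    rewrite <- (IH (S a)) by lia.
    assert (Head : discardn a ** TId (S b) ;; (TId 1 ** discardn b) ≈ ecirc N (EVar a)).
    { simpl. destruct (Nat.ltb_spec a N); [|lia]. replace (N - S a) with b by lia.
      rewrite <- (tens_unitl (TId 1 ** discardn b)) at 1.
      rewrite interchange, comp_idr, comp_idl by arity. reflexivity. }
    assert (Tail : discardn a ** TId (S b) ;; (discardn 1 ** TId b) ≈ discardn (S a) ** TId b).
    { rewrite <- (tens_unitl (discardn 1 ** TId b)), interchange, comp_idr, comp_idl by arity.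
      rewrite <- tens_assoc, discardn_add, Nat.add_1_r. reflexivity. }
    rewrite Head, Tail. reflexivity.
Qed.

Lemma ecircs_eequiv n es es' : Forall2 (eequiv n) es es' -> ecircs n es ≈ ecircs n es'.
Proof.
  induction 1 as [|e e' es es' He _ IH]; simpl; [reflexivity|].
  now rewrite IH, (He : ecirc n e ≈ ecirc n e').
Qed.

Lemma ecircs_normal_form c : wt c ->
  c ≈ ecircs (tdom c) (interp expr_gen c (map EVar (seq 0 (tdom c)))).
Proof.
  intros W.
  rewrite <- ecircs_comp, <- (ecircs_vars (tdom c) (tdom c) 0)
    by (rewrite ?length_map, ?length_seq; auto).
  simpl. rewrite tens_unitl, comp_idl by reflexivity. reflexivity.
Qed.

Definition dep_gen (g : gen) (ls : list (list nat)) : list (list nat) :=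
  repeat (concat ls) (gcod g).

(* [and_disjoint t ls] says that if the input wires of [t] depend on the
   input ports listed in [ls], the two arguments of every AND gate of [t]
   depend on disjoint sets of ports. *)
Fixpoint and_disjoint (t : term) (ls : list (list nat)) : Prop :=
  match t with
  | TGen gAnd => match ls with [a; b] => forall i, In i a -> In i b -> False | _ => True end
  | TGen _ | TId _ | TSym _ _ => True
  | TComp f g => and_disjoint f ls /\ and_disjoint g (interp dep_gen f ls)
  | TTens f g => and_disjoint f (firstn (tdom f) ls) /\ and_disjoint g (skipn (tdom f) ls)
  end.

Lemma in_firstn {A} k (l : list A) x : In x (firstn k l) -> In x l.
Proof. rewrite <- (firstn_skipn k l) at 2. intros; apply in_or_app; auto. Qed.

Lemma in_skipn {A} k (l : list A) x : In x (skipn k l) -> In x l.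
Proof. rewrite <- (firstn_skipn k l) at 2. intros; apply in_or_app; auto. Qed.

Definition bounded (k : nat) (ws : list nat) : Prop := forall w, In w ws -> w < k.

Definition occurrence : Type := gen * list nat * list nat.

Lemma flat_fresh t : forall ins fr o oc fr', bounded fr ins -> flat t ins fr = (o, oc, fr') ->
  fr <= fr' /\ bounded fr' o /\
  forall g i o', In (g, i, o') oc -> bounded fr' i /\ bounded fr' o'.
Proof.
  unfold bounded.
  induction t as [g|k|m k|f IHf g IHg|f IHf g IHg]; intros ins fr o oc fr' Hins Hflat;
    simpl in Hflat.
  - injection Hflat as <- <- <-. split; [lia | split].
    + intros w Hw. apply in_seq in Hw. lia.
    + intros g' i o' [[= <- <- <-]|[]].
      split; intros w Hw; [specialize (Hins w Hw) | apply in_seq in Hw]; lia.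
  - injection Hflat as <- <- <-. split; [lia | split; [exact Hins | intros ? ? ? []]].
  - injection Hflat as <- <- <-. split; [lia | split; [|intros ? ? ? []]].
    intros w [Hw|Hw]%in_app_or; eauto using in_firstn, in_skipn.
  - destruct (flat f ins fr) as [[o1 oc1] fr1] eqn:E1.
    destruct (flat g o1 fr1) as [[o2 oc2] fr2] eqn:E2. injection Hflat as <- <- <-.
    destruct (IHf _ _ _ _ _ Hins E1) as (Le1&O1&B1).
    destruct (IHg _ _ _ _ _ O1 E2) as (Le2&O2&B2).
    split; [lia | split; [exact O2|]].
    intros g0 i o' [H|H]%in_app_or; [|exact (B2 _ _ _ H)].
    destruct (B1 _ _ _ H) as (Bi&Bo).
    split; intros w Hw; [specialize (Bi w Hw) | specialize (Bo w Hw)]; lia.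
  - destruct (flat f (firstn (tdom f) ins) fr) as [[o1 oc1] fr1] eqn:E1.
    destruct (flat g (skipn (tdom f) ins) fr1) as [[o2 oc2] fr2] eqn:E2.
    injection Hflat as <- <- <-.
    destruct (IHf _ _ _ _ _ (fun w H => Hins w (in_firstn _ _ _ H)) E1) as (Le1&O1&B1).
    assert (Hins2 : forall w, In w (skipn (tdom f) ins) -> w < fr1).
    { intros w H. specialize (Hins w (in_skipn _ _ _ H)). lia. }
    destruct (IHg _ _ _ _ _ Hins2 E2) as (Le2&O2&B2).
    split; [lia | split].
    + intros w [Hw|Hw]%in_app_or; [specialize (O1 w Hw) | specialize (O2 w Hw)]; lia.
    + intros g0 i o' [H|H]%in_app_or; [|exact (B2 _ _ _ H)].
      destruct (B1 _ _ _ H) as (Bi&Bo).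
      split; intros w Hw; [specialize (Bi w Hw) | specialize (Bo w Hw)]; lia.
Qed.

Lemma map_ext_bounded {A} (f g : nat -> A) k ws :
  bounded k ws -> (forall w, w < k -> f w = g w) -> map f ws = map g ws.
Proof. intros Hws Hfg. apply map_ext_in. auto. Qed.

Lemma map_seq_const {A} (f : nat -> A) v k c :
  (forall w, k <= w -> f w = v) -> map f (seq k c) = repeat v c.
Proof.
  revert k; induction c as [|c IH]; intros k Hf; simpl; [reflexivity|].
  rewrite Hf, IH; [reflexivity | intros w Hw; apply Hf | ..]; lia.
Qed.

(* Wires are labelled by lists of input ports; [fr] is the first unused wire name. *)
Record labelling (fr : nat) (lab0 : nat -> list nat) (oc : list occurrence) (P : Prop)
    (lab : nat -> list nat) : Prop := {
  labelling_extends : forall w, w < fr -> lab w = lab0 w;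
  labelling_monotone : forall g i o, In (g, i, o) oc ->
    forall x y, In x i -> In y o -> incl (lab x) (lab y);
  labelling_disjoint : P -> forall p q o, In (gAnd, [p; q], o) oc ->
    forall i, In i (lab p) -> In i (lab q) -> False }.

Lemma labelling_app fr fr1 lab0 lab1 lab2 oc1 oc2 P1 P2 : fr <= fr1 ->
  (forall g i o, In (g, i, o) oc1 -> bounded fr1 i /\ bounded fr1 o) ->
  labelling fr lab0 oc1 P1 lab1 -> labelling fr1 lab1 oc2 P2 lab2 ->
  labelling fr lab0 (oc1 ++ oc2) (P1 /\ P2) lab2.
Proof.
  intros Hfr B1 [X1 M1 D1] [X2 M2 D2]. split.
  - intros w Hw. rewrite X2, X1 by lia. reflexivity.
  - intros g i o [H|H]%in_app_or x y Hx Hy; [|eauto].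
    destruct (B1 _ _ _ H) as (Bi&Bo). rewrite !X2 by auto. eauto.
  - intros [P1' P2'] p q o [H|H]%in_app_or; [|eauto].
    destruct (B1 _ _ _ H) as (Bi&_). rewrite !X2 by (apply Bi; simpl; auto). eauto.
Qed.

Lemma labelling_gen g ins fr lab0 : bounded fr ins ->
  let lab w := if fr <=? w then concat (map lab0 ins) else lab0 w in
  labelling fr lab0 [(g, ins, seq fr (gcod g))] (and_disjoint (TGen g) (map lab0 ins)) lab
  /\ map lab (seq fr (gcod g)) = dep_gen g (map lab0 ins).
Proof.
  intros Hins lab. split; [split|].
  - intros w Hw. unfold lab. destruct (Nat.leb_spec fr w); [lia | reflexivity].
  - intros g' i o [[= <- <- <-]|[]] x y Hx Hy z Hz.
    apply in_seq in Hy. specialize (Hins x Hx). unfold lab in *.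
    destruct (Nat.leb_spec fr x), (Nat.leb_spec fr y); try lia.
    apply in_concat. exists (lab0 x). auto using in_map.
  - intros HP p q o [[= -> -> <-]|[]].
    assert (p < fr /\ q < fr) as [Hp Hq] by (split; apply Hins; simpl; auto).
    unfold lab. destruct (Nat.leb_spec fr p), (Nat.leb_spec fr q); try lia. exact HP.
  - apply map_seq_const. intros w Hw. unfold lab. destruct (Nat.leb_spec fr w); [reflexivity | lia].
Qed.

Lemma flat_labelling t : forall ins fr lab0 o oc fr', bounded fr ins ->
  flat t ins fr = (o, oc, fr') ->
  exists lab, labelling fr lab0 oc (and_disjoint t (map lab0 ins)) lab /\
    map lab o = interp dep_gen t (map lab0 ins).
Proof.
  induction t as [g|k|m k|f IHf g IHg|f IHf g IHg]; intros ins fr lab0 o oc fr' Hins Hflat;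
    simpl in Hflat.
  - injection Hflat as <- <- <-. eexists. apply (labelling_gen g ins fr lab0 Hins).
  - injection Hflat as <- <- <-. exists lab0. repeat split; auto; intros ? ? ? [].
  - injection Hflat as <- <- <-. exists lab0. split; [split; auto; intros ? ? ? []|].
    simpl. rewrite map_app, firstn_map, skipn_map. reflexivity.
  - destruct (flat f ins fr) as [[o1 oc1] fr1] eqn:E1.
    destruct (flat g o1 fr1) as [[o2 oc2] fr2] eqn:E2. injection Hflat as <- <- <-.
    destruct (flat_fresh _ _ _ _ _ _ Hins E1) as (Le1&O1&B1).
    destruct (IHf _ _ lab0 _ _ _ Hins E1) as (lab1&L1&M1).
    destruct (IHg _ _ lab1 _ _ _ O1 E2) as (lab2&L2&M2).
    rewrite M1 in L2, M2. exists lab2. split; [|exact M2].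
    exact (labelling_app _ _ _ _ _ _ _ _ _ Le1 B1 L1 L2).
  - destruct (flat f (firstn (tdom f) ins) fr) as [[o1 oc1] fr1] eqn:E1.
    destruct (flat g (skipn (tdom f) ins) fr1) as [[o2 oc2] fr2] eqn:E2.
    injection Hflat as <- <- <-.
    assert (Hins1 : bounded fr (firstn (tdom f) ins)) by (intros w Hw; eauto using in_firstn).
    destruct (flat_fresh _ _ _ _ _ _ Hins1 E1) as (Le1&O1&B1).
    assert (Hins2 : bounded fr1 (skipn (tdom f) ins)).
    { intros w Hw. specialize (Hins w (in_skipn _ _ _ Hw)). lia. }
    destruct (IHf _ _ lab0 _ _ _ Hins1 E1) as (lab1&L1&M1).
    destruct (IHg _ _ lab1 _ _ _ Hins2 E2) as (lab2&L2&M2).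
    assert (Skip : map lab1 (skipn (tdom f) ins) = map lab0 (skipn (tdom f) ins)).
    { apply (map_ext_bounded _ _ fr); [intros w Hw; eauto using in_skipn | apply L1]. }
    rewrite Skip in L2, M2. rewrite <- firstn_map in L1, M1. rewrite <- skipn_map in L2, M2.
    exists lab2. split; [exact (labelling_app _ _ _ _ _ _ _ _ _ Le1 B1 L1 L2)|].
    cbn [interp]. rewrite map_app, M2, <- M1. f_equal.
    apply (map_ext_bounded _ _ fr1 _ O1). apply L2.
Qed.

Definition ports (n : nat) : list (list nat) := map (fun i => [i]) (seq 0 n).

Lemma safe_of_and_disjoint t : and_disjoint t (ports (tdom t)) -> safe t.
Proof.
  intros Ht. unfold safe, occs.
  destruct (flat t (seq 0 (tdom t)) (tdom t)) as [[o oc] fr'] eqn:E. simpl.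
  assert (Hseq : bounded (tdom t) (seq 0 (tdom t))) by (intros w Hw; apply in_seq in Hw; lia).
  destruct (flat_labelling t _ _ (fun i => [i]) _ _ _ Hseq E) as (lab & [X M D] & _).
  assert (Reach : forall x y, reach t x y -> incl (lab x) (lab y)).
  { intros x y Hr. induction Hr as [x y (g & i & o' & Ho & Hx & Hy)| x | x y z _ IH1 _ IH2].
    - unfold occs in Ho. rewrite E in Ho. exact (M g i o' Ho x y Hx Hy).
    - apply incl_refl.
    - eapply incl_tran; eauto. }
  intros p q o' Ho i Hi [Hp Hq].
  apply (D Ht p q o' Ho i); [apply (Reach i p) | apply (Reach i q)]; auto;
    rewrite X by auto; simpl; auto.
Qed.

Lemma firstn_app_length {A} (l1 l2 : list A) k : length l1 = k -> firstn k (l1 ++ l2) = l1.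
Proof. intros <-. rewrite firstn_app, firstn_all, Nat.sub_diag. apply app_nil_r. Qed.

Lemma skipn_app_length {A} (l1 l2 : list A) k : length l1 = k -> skipn k (l1 ++ l2) = l2.
Proof. intros <-. rewrite skipn_app, skipn_all, Nat.sub_diag. reflexivity. Qed.

Lemma interp_dep_discardn k ls : interp dep_gen (discardn k) ls = skipn k ls.
Proof.
  revert ls; induction k as [|k IH]; intros ls; simpl; [reflexivity|].
  rewrite IH. destruct ls; simpl; [apply skipn_nil | reflexivity].
Qed.

Lemma interp_dep_copyn k ls : length ls = k -> interp dep_gen (copyn k) ls = ls ++ ls.
Proof.
  revert ls; induction k as [|k IH]; intros [|l ls] Hls; simpl in Hls; try lia; [reflexivity|].
  cbn [copyn interp tdom firstn skipn]. unfold dep_gen at 1. simpl.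
  rewrite IH, app_nil_r, firstn_app_length, skipn_app_length by lia. simpl.
  rewrite <- app_assoc. reflexivity.
Qed.

Lemma and_disjoint_discardn k ls : and_disjoint (discardn k) ls.
Proof. revert ls; induction k; simpl; auto. Qed.

Lemma and_disjoint_copyn k ls : and_disjoint (copyn k) ls.
Proof. revert ls; induction k; simpl; auto. Qed.

Lemma and_disjoint_fork n f g ls : tdom f = n -> length ls = n ->
  and_disjoint (copyn n ;; (f ** g)) ls <-> and_disjoint f ls /\ and_disjoint g ls.
Proof.
  intros Hf Hls. simpl. rewrite interp_dep_copyn, Hf, firstn_app_length, skipn_app_length by auto.
  pose proof (and_disjoint_copyn n ls). tauto.
Qed.

Lemma length_ports n : length (ports n) = n.
Proof. unfold ports. rewrite length_map, length_seq. reflexivity. Qed.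

Lemma interp_dep_ecirc n e : exists l,
  interp dep_gen (ecirc n e) (ports n) = [l] /\ forall x, In x l -> occurs x e.
Proof.
  assert (Hdisc : interp dep_gen (discardn n) (ports n) = []).
  { rewrite interp_dep_discardn. apply skipn_all2. rewrite length_ports. lia. }
  induction e as [i| | |a (la&Ea&Ha) b (lb&Eb&Hb)|a (la&Ea&Ha) b (lb&Eb&Hb)]; simpl ecirc.
  2,3: exists []; split; [cbn [interp]; rewrite Hdisc; reflexivity | intros _ []].
  2,3: exists (la ++ lb ++ []); split; [|intros x [Hx|[Hx|[]]%in_app_or]%in_app_or; simpl; auto];
    cbn [interp]; rewrite interp_dep_copyn, tdom_ecirc, firstn_app_length, skipn_app_length
      by apply length_ports;
    rewrite Ea, Eb; reflexivity.
  destruct (Nat.ltb_spec i n).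
  - exists [i]. split; [|intros x [->|[]]; reflexivity].
    assert (Hports : skipn i (ports n) = [i] :: map (fun j => [j]) (seq (S i) (n - S i))).
    { unfold ports. rewrite skipn_map, skipn_seq. replace (n - i) with (S (n - S i)) by lia.
      reflexivity. }
    cbn [interp tdom]. rewrite !interp_dep_discardn, tdom_discardn, Hports. simpl.
    rewrite !skipn_all2 by (rewrite ?length_firstn, ?length_map, ?length_seq; lia).
    reflexivity.
  - exists []. split; [cbn [interp]; rewrite Hdisc; reflexivity | intros _ []].
Qed.

Lemma and_disjoint_ecirc n e : safe_expr e -> and_disjoint (ecirc n e) (ports n).
Proof.
  induction e as [i| | |a IHa b IHb|a IHa b IHb]; simpl ecirc; intros He;
    try destruct (i <? n); try solve [simpl; auto using and_disjoint_discardn].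
  - destruct He as (Sa&Sb). split; [|exact I].
    apply and_disjoint_fork; auto using tdom_ecirc, length_ports.
  - destruct He as (Sa&Sb&Dab). split.
    + apply and_disjoint_fork; auto using tdom_ecirc, length_ports.
    + destruct (interp_dep_ecirc n a) as (la&Ea&Ha), (interp_dep_ecirc n b) as (lb&Eb&Hb).
      cbn [interp]. rewrite interp_dep_copyn, tdom_ecirc, firstn_app_length, skipn_app_length
        by apply length_ports.
      rewrite Ea, Eb. simpl. eauto.
Qed.

Lemma safe_ecircs n es : Forall safe_expr es -> safe (ecircs n es).
Proof.
  intros Hes. apply safe_of_and_disjoint. rewrite tdom_ecircs.
  induction Hes as [|e es He _ IH]; simpl ecircs.
  - apply and_disjoint_discardn.
  - apply and_disjoint_fork; auto using and_disjoint_ecirc, tdom_ecirc, length_ports.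
Qed.

Lemma exists_safe_exprs n es : exists es', Forall safe_expr es' /\ Forall2 (eequiv n) es es'.
Proof.
  induction es as [|e es (es' & S & F)]; [exists []; auto|].
  destruct (vars_below_exists e) as (k & Hk).
  destruct (exists_safe_expr n k e Hk) as (e' & S' & _ & E').
  exists (e' :: es'). auto.
Qed.

Theorem mainTheorem4 (c : term) : wt c -> exists d : term, safe d /\ eqE c d.
Proof.
  intros W.
  destruct (exists_safe_exprs (tdom c) (interp expr_gen c (map EVar (seq 0 (tdom c)))))
    as (es & Safe & Equiv).
  exists (ecircs (tdom c) es). split; [exact (safe_ecircs _ _ Safe)|].
  apply eqE_of_eqw; [exact W|].
  rewrite (ecircs_normal_form c W) at 1. exact (ecircs_eequiv _ _ _ Equiv).
Qed.
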